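(* Let $\mathcal B$ be \textsc{AlternatingOracle}, fix an input and a realization of its random bits, and let $H_{\mathcal B}$ be an eviction graph of $\mathcal B$. Suppose $(a,b_1),\dots,(a,b_d)$ are edges of $H_{\mathcal B}$ such that $(b_1,\dots,b_d)$ is a divisible chain, with $h=d/3$ triples, and let $\psi$ be the maximum of the number of short triples among the first $h/2$ triples (left group) and the number of short triples among the last $h/2$ triples (right group). Then $$\sum_{x=1}^d\eta(b_x)\ge\frac{(d/6-\psi)^2\,k}{20}.$$
   Context: Caching with predictions. Cache of capacity $k$, starting empty; requests $\sigma(1),\dots,\sigma(T)$; $\nu(t)=\min\{s>t:\sigma(s)=\sigma(t)\}$ ($T+1$ if none); prediction $\omega(t)$ of $\nu(t)$ received with request $t$; $\eta(t)=|\nu(t)-\omega(t)|$. Cached pages are identified by the index of their most recent request: $\mathcal I(t)$ is the set of indices $\max\{t'\le t:\sigma(t')=s\}$ over cached pages $s$ after request $t$. \textsc{AlternatingOracle}: on a miss with full cache at time $t$ one of three rules evicts a page: BlindOracle (evict cached $\sigma(i)$, $i\in\mathcal I(t-1)$, with maximal $\omega(i)$); RandomAlg (evict a uniformly random cached page); Corrector (with $W=\{i\in\mathcal I(t-1):\omega(i)<t\}$, evict $\sigma(i)$, $i\in W$, with minimal $\omega(i)$ if $W\ne\emptyset$, otherwise evict as BlindOracle). If $\sigma(t)$ was never requested before, BlindOracle is used; otherwise, if the most recent eviction of page $\sigma(t)$ used BlindOracle / RandomAlg / Corrector, then at time $t$ RandomAlg / Corrector / BlindOracle is used, respectively. Triggering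 and chains: if page $\sigma(i)$ (current index $i$) is evicted and $\nu(i)\le T$, the eviction at time $\nu(i)$ is triggered by it; $(s_1,\dots,s_d)$ is a chain if for each $m<d$, $\sigma(s_{m+1})$ is evicted at time $\nu(s_m)$. Eviction graph: directed graph on $\{1,\dots,T\}$ such that for every edge $(i,j)$ there is a time $t+1$ at which the algorithm evicts $\sigma(j)$, $j\in\mathcal I(t)$, while $i\in\mathcal I(t)$ and $\nu(i)>\nu(j)$; for each $j$ at most one edge $(i,j)$. Triples and divisibility: a chain $(b_1,\dots,b_d)$ is divisible if $d=6m$ for a positive integer $m$ and, for each $i=1,\dots,d/3$, writing $(l_i,c_i,r_i)=(b_{3i-2},b_{3i-1},b_{3i})$ (the $i$-th triple), the page $\sigma(l_i)$ was evicted by the BlindOracle rule, $\sigma(c_i)$ by the RandomAlg rule, and $\sigma(r_i)$ by the Corrector rule. For the $i$-th triple let $L_i=t'-t$, where $t$ is the time of eviction of $\sigma(c_i)$ and $t'$ the time of eviction of $\sigma(r_i)$; the triple is short if $L_i\le k/10$. The left group consists of the first $h/2$ triples and the right group of the last $h/2$ triples, $h=d/3$. *)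

From mathcomp Require Import all_boot all_order all_algebra.
Set Implicit Arguments. Unset Strict Implicit. Unset Printing Implicit Defensive.
Import Order.TTheory GRing.Theory Num.Theory.

(* Requests are at times 1..T; pages are natural numbers; sigma t is the
   page requested at time t; omega t is the (natural-number) prediction of
   nu t received with request t. *)

(* nu(t) = min{ s > t : sigma s = sigma t }  (T+1 if none), for t <= T *)
Definition nu (T : nat) (sigma : nat -> nat) (t : nat) : nat :=
  t.+1 + find (fun s => sigma s == sigma t) (iota t.+1 (T - t)).

Definition eta (T : nat) (sigma omega : nat -> nat) (t : nat) : nat :=
  (nu T sigma t - omega t) + (omega t - nu T sigma t).

Inductive rule := BlindOracle | RandomAlg | Corrector.

Definition next_rule (r : rule) : rule :=
  match r with
  | BlindOracle => RandomAlg
  | RandomAlg => Corrector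
  | Corrector => BlindOracle
  end.

(* The rule used for the most recent eviction (strictly before time t) of
   page p, if any.  ev s = Some (j, r) means: at time s the page sigma j
   (with current index j) is evicted, using rule r. *)
Definition last_evict_rule (sigma : nat -> nat) (ev : nat -> option (nat * rule))
    (p t : nat) : option rule :=
  foldl (fun acc s => match ev s with
                      | Some (j, r) => if sigma j == p then Some r else acc
                      | None => acc end) None (iota 1 t.-1).

Definition rule_at (sigma : nat -> nat) (ev : nat -> option (nat * rule))
    (t : nat) : rule :=
  if ~~ has (fun s => sigma s == sigma t) (iota 1 t.-1) then BlindOracle
  else match last_evict_rule sigma ev (sigma t) t with
       | Some r => next_rule r
       | None => BlindOracle (* unreachable on a miss *)
       end.

(* j in I is a legal choice of rule r at time t with cached indices I
   (ties are broken arbitrarily; RandomAlg may pick any cached page, which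
   covers every realization of the random bits). *)
Definition blind_ok (omega : nat -> nat) (I : seq nat) (j : nat) : Prop :=
  forall i, i \in I -> omega i <= omega j.

Definition rule_ok (omega : nat -> nat) (t : nat) (I : seq nat) (r : rule)
    (j : nat) : Prop :=
  match r with
  | BlindOracle => blind_ok omega I j
  | RandomAlg => True
  | Corrector =>
      let W := [seq i <- I | omega i < t] in
      if W is [::] then blind_ok omega I j
      else j \in W /\ (forall i, i \in W -> omega j <= omega i)
  end.

(* A run of AlternatingOracle with cache capacity k on sigma(1..T) with
   predictions omega: C t is the set I(t) (as a list of indices) after
   request t; ev t is the eviction performed at time t (if any). *)
Definition alt_oracle_run (k T : nat) (sigma omega : nat -> nat)
    (C : nat -> seq nat) (ev : nat -> option (nat * rule)) : Prop :=
  C 0 = [::] /\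
  (forall t, (t == 0) || (T < t) -> ev t = None) /\
  (forall t, 1 <= t <= T ->
     let I := C t.-1 in
     if has (fun i => sigma i == sigma t) I then
       C t = t :: [seq i <- I | sigma i != sigma t] /\ ev t = None
     else if size I < k then
       C t = t :: I /\ ev t = None
     else exists j,
       [/\ ev t = Some (j, rule_at sigma ev t), j \in I,
           rule_ok omega t I (rule_at sigma ev t) j & C t = t :: rem j I]).

Definition eviction_graph (T : nat) (sigma : nat -> nat) (C : nat -> seq nat)
    (ev : nat -> option (nat * rule)) (H : nat -> nat -> Prop) : Prop :=
  (forall i j, H i j ->
     [/\ 1 <= i <= T, 1 <= j <= T &
      exists t r, [/\ ev t.+1 = Some (j, r), j \in C t, i \in C t &
                      nu T sigma j < nu T sigma i]]) /\
  (forall i i' j, H i j -> H i' j -> i = i').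

Definition is_chain (T : nat) (sigma : nat -> nat)
    (ev : nat -> option (nat * rule)) (b : seq nat) : Prop :=
  forall x, x.+1 < size b ->
    exists r, ev (nu T sigma (nth 0 b x)) = Some (nth 0 b x.+1, r).

Definition evicted_by (ev : nat -> option (nat * rule)) (j : nat) (r : rule) : Prop :=
  exists t, ev t = Some (j, r).

Definition divisible (T : nat) (sigma : nat -> nat)
    (ev : nat -> option (nat * rule)) (b : seq nat) : Prop :=
  is_chain T sigma ev b /\
  (exists m, 0 < m /\ size b = 6 * m) /\
  (forall i, i < size b %/ 3 ->
     [/\ evicted_by ev (nth 0 b (3 * i)) BlindOracle,
         evicted_by ev (nth 0 b (3 * i).+1) RandomAlg &
         evicted_by ev (nth 0 b (3 * i).+2) Corrector]).

(* time at which index j is evicted (within 1..T; T+1 if never) *)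
Definition ev_time (T : nat) (ev : nat -> option (nat * rule)) (j : nat) : nat :=
  (find (fun t => if ev t is Some (j', _) then j' == j else false) (iota 1 T)).+1.

Definition short_triple (k T : nat) (ev : nat -> option (nat * rule))
    (b : seq nat) (i : nat) : bool :=
  (((ev_time T ev (nth 0 b (3 * i).+2))%:R - (ev_time T ev (nth 0 b (3 * i).+1))%:R
    <= k%:R / 10 :> rat))%R.

Definition psi (k T : nat) (ev : nat -> option (nat * rule)) (b : seq nat) : nat :=
  maxn (count (short_triple k T ev b) (iota 0 (size b %/ 6)))
       (count (short_triple k T ev b) (iota (size b %/ 6) (size b %/ 6))).

From mathcomp Require Import all_boot all_order all_algebra.
From mathcomp Require Import zify lra.
Import Order.TTheory GRing.Theory Num.Theory.
Set Implicit Arguments. Unset Strict Implicit. Unset Printing Implicit Defensive.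

(* Let t_c(i) and t_r(i) be the eviction times of the middle and
   right pages c_i, r_i of the i-th triple.  Every page is evicted no later
   than its next request, and the next request of each b_x triggers the
   eviction of b_(x+1); hence t_c(0) <= t_r(0) <= t_c(1) <= t_r(1) <= ...
   Let w = omega(a).  Since a is cached whenever some b_x is evicted,
   BlindOracle evicting l_i gives omega(l_i) >= w, so eta(l_i) >= w - t_c(i),
   and Corrector evicting r_i gives omega(r_i) <= w whenever w < t_r(i), so
   eta(r_i) >= t_r(i) - w.  If w <= t_c(h/2), then in the right group the j-th
   non-short triple ends more than j k/10 after w, and the at least d/6 - psi
   non-short triples contribute at least (k/10)(1 + ... + (d/6 - psi)).
   Otherwise the left group ends before w and the l_i play the same role. *)

Lemma iota_recr m n : iota m n.+1 = iota m n ++ [:: m + n].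
Proof. by rewrite -addn1 iotaD. Qed.

Lemma leq_sum_nat a n (F G : nat -> nat) :
  (forall i, a <= i < n -> F i <= G i) -> \sum_(a <= i < n) F i <= \sum_(a <= i < n) G i.
Proof.
move=> FG; rewrite big_nat_cond [leqRHS]big_nat_cond.
by apply: leq_sum => i /andP[/FG].
Qed.

Lemma sum_triples_le (f : nat -> nat) n :
  \sum_(0 <= i < n) (f (3 * i) + f (3 * i).+2) <= \sum_(0 <= x < 3 * n) f x.
Proof.
elim: n => [|n IH]; first by rewrite !big_geq.
rewrite big_nat_recr // (_ : 3 * n.+1 = (3 * n).+3); last by lia.
by rewrite !big_nat_recr //=; lia.
Qed.

Lemma natr_sub_le_div (R : realFieldType) (U V k n : nat) : 0 < n ->
  (U%:R - V%:R <= k%:R / n%:R :> R)%R = (n * (U - V) <= k).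
Proof.
move=> n0; rewrite ler_pdivlMr ?ltr0n //.
have [VU | UV] := leqP V U; first by rewrite -natrB // -natrM ler_nat mulnC.
rewrite (_ : U - V = 0) ?muln0 ?leq0n; last lia.
apply/idP; have : (U%:R < V%:R :> R)%R by rewrite ltr_nat.
have : (0 < n%:R :> R)%R by rewrite ltr0n.
have : (0 <= k%:R :> R)%R by [].
nra.
Qed.

Lemma triangular_count_step (k q c S x : nat) (e : bool) :
  k * c * c.+1 <= 2 * q * S -> k * (c + e) <= q * x ->
  k * (c + e) * (c + e).+1 <= 2 * q * (S + x).
Proof. by case: e; rewrite ?addn0 ?addn1 => IH step; nia. Qed.

Lemma sq_le_triangular k x c : x <= c -> k * x ^ 2 <= k * c * c.+1.
Proof. by move=> xc; rewrite -mulnA leq_mul2l leq_mul ?orbT // ltnW. Qed.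

Section WideGaps.

Variables (k q : nat) (u v : nat -> nat).

Definition wide_gap i := k < q * (u i - v i).

(* The intervals [v i, u i] are disjoint subintervals of [v a, u (a + p)],
   and each wide one is longer than k / q. *)
Lemma count_wide_gap_span a p :
  (forall i, a <= i <= a + p -> v i <= u i) ->
  (forall i, a <= i < a + p -> u i <= v i.+1) ->
  k * count wide_gap (iota a p.+1) + q * v a <= q * u (a + p).
Proof.
elim: p => [|p IH] vu uv.
  rewrite addn0 /= /wide_gap addn0; have := vu a; case: ltnP => /=; nia.
rewrite iota_recr count_cat /= addn0 addnS.
have := IH (fun i lt => vu i ltac:(lia)) (fun i lt => uv i ltac:(lia)).
have := vu (a + p).+1; have := uv (a + p).
rewrite /wide_gap; case: ltnP => /= wide ? ?; nia.
Qed.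

End WideGaps.

Section CountSums.

Variables (k q : nat) (P : pred nat) (g : nat -> nat).

Lemma sum_prefix_counts a n :
  (forall j, j < n -> k * count P (iota a j.+1) <= q * g (a + j)) ->
  k * count P (iota a n) * (count P (iota a n)).+1 <= 2 * q * \sum_(a <= i < a + n) g i.
Proof.
elim: n => [|n IH] bound; first by rewrite muln0 mul0n.
rewrite addnS big_nat_recr ?leq_addr // iota_recr count_cat /= addn0.
apply: triangular_count_step; first by apply: IH => j lt; apply: bound; lia.
by have := bound n (ltnSn n); rewrite iota_recr count_cat /= addn0.
Qed.

Lemma sum_suffix_counts a n :
  (forall j, j < n -> k * count P (iota (a + j) (n - j)) <= q * g (a + j)) ->
  k * count P (iota a n) * (count P (iota a n)).+1 <= 2 * q * \sum_(a <= i < a + n) g i.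
Proof.
elim: n a => [|n IH] a bound; first by rewrite muln0 mul0n.
rewrite addnS big_ltn ?ltnS ?leq_addr // -addSn /= addnC (addnC (g a)).
apply: triangular_count_step.
  by apply: IH => j lt; have := bound j.+1 lt; rewrite subSS addnS -addSn.
by have := bound 0 (ltn0Sn n); rewrite addn0 subn0 /= addnC.
Qed.

End CountSums.

Section AlternatingOracleRun.

Variables (k T : nat) (sigma omega : nat -> nat).
Variables (C : nat -> seq nat) (ev : nat -> option (nat * rule)).
Hypothesis run : alt_oracle_run k T sigma omega C ev.

Lemma cache_step t : t < T ->
  exists2 L, C t.+1 = t.+1 :: L &
    subseq L (C t) /\ {in L, forall x, sigma x != sigma t.+1}.
Proof.
case: run => _ [_ step] ltT; have /= := step t.+1 ltT.
case: ifP => [_ [-> _] | hit].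
  exists [seq i <- C t | sigma i != sigma t.+1]; split=> //; first exact: filter_subseq.
  by move=> x; rewrite mem_filter => /andP[].
have fresh : {in C t, forall x, sigma x != sigma t.+1}.
  by move=> x xC; apply: contraFN hit => /eqP sx; apply/hasP; exists x; rewrite ?sx.
case: ifP => _ => [[-> _] | [j [_ _ _ ->]]].
  by exists (C t); split=> //; exact: subseq_refl.
exists (rem j (C t)); split; first exact: rem_subseq.
by move=> x /(mem_subseq (rem_subseq _ _)); exact: fresh.
Qed.

Lemma cache_inv t : t <= T -> uniq (C t) /\
  {in C t, forall j, 0 < j <= t /\ forall s, j < s <= t -> sigma s != sigma j}.
Proof.
elim: t => [_ | t IH ltT]; first by case: run => ->.
have [uC HC] := IH (ltnW ltT).
have [L -> [subL freshL]] := cache_step ltT.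
split.
  rewrite /= (subseq_uniq subL uC) andbT.
  by apply/negP => /(mem_subseq subL) /HC; lia.
move=> j; rewrite inE => /predU1P[-> | jL]; first by split=> //; lia.
have [jt later] := HC j (mem_subseq subL jL).
split=> [|s]; first lia.
move=> /andP[js]; rewrite leq_eqVlt => /predU1P[-> | st].
  by rewrite eq_sym; exact: freshL.
by apply: later; lia.
Qed.

Lemma cached_lt_nu t j : t <= T -> j \in C t -> t < nu T sigma j.
Proof.
move=> tT jC; have [_ /(_ j jC) [jt later]] := cache_inv tT.
rewrite /nu; set P := fun s => sigma s == sigma j.
have [|lt_find] := leqP (t - j) (find P (iota j.+1 (T - j))); first lia.
have hasP : has P (iota j.+1 (T - j)) by rewrite has_find size_iota; lia.
have := nth_find 0 hasP.
rewrite nth_iota; last by move: hasP; rewrite has_find size_iota.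
move=> /eqP same.
by have := later (j.+1 + find P (iota j.+1 (T - j))); rewrite same eqxx; lia.
Qed.

Lemma evictionP t j r : ev t = Some (j, r) ->
  [/\ 0 < t <= T, j \in C t.-1, rule_ok omega t (C t.-1) r j &
      C t = t :: rem j (C t.-1)].
Proof.
case: run => _ [quiet step] evt.
have tT : 0 < t <= T.
  by rewrite lt0n leqNgt -negb_or; apply/negP => /quiet; rewrite evt.
have /= := step t tT.
case: ifP => _; first by case=> _; rewrite evt.
case: ifP => _; first by case=> _; rewrite evt.
by case=> j' []; rewrite evt => -[<- <-].
Qed.

Lemma evicted_uncached t0 j r t : ev t0 = Some (j, r) -> t0 <= t <= T -> j \notin C t.
Proof.
move=> evt0; have [t0T jC _ Ct0] := evictionP evt0.
have [uC /(_ j jC) [jt _]] := cache_inv (t := t0.-1) ltac:(lia).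
elim: t => [|t IH] /andP[t0t tT]; first lia.
case: (ltngtP t0 t.+1) => [lt0t | | eq0t]; last first.
- rewrite -eq0t Ct0 inE negb_or (mem_rem_uniq _ uC) inE eqxx /= andbT.
  by apply/eqP; lia.
- lia.
have [L -> [subL _]] := cache_step tT.
rewrite inE negb_or; apply/andP; split; first by apply/eqP; lia.
by apply: contra (IH ltac:(lia)); exact: mem_subseq.
Qed.

Lemma eviction_time_inj t1 t2 j r1 r2 :
  ev t1 = Some (j, r1) -> ev t2 = Some (j, r2) -> t1 = t2.
Proof.
suff once u1 u2 s1 s2 : ev u1 = Some (j, s1) -> ev u2 = Some (j, s2) -> u1 < u2 -> False.
  move=> e1 e2; case: (ltngtP t1 t2) => // [lt12 | lt21].
  - by case: (once _ _ _ _ e1 e2 lt12).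
  - by case: (once _ _ _ _ e2 e1 lt21).
move=> e1 e2 lt12; have [u2T jC _ _] := evictionP e2.
by move: jC; apply/negP; apply: evicted_uncached e1 _; lia.
Qed.

Lemma ev_timeE s j r : ev s = Some (j, r) -> ev_time T ev j = s.
Proof.
move=> evs; have [sT _ _ _] := evictionP evs.
rewrite /ev_time; set P := fun t => if ev t is Some (j', _) then j' == j else false.
have hasP : has P (iota 1 T).
  by apply/hasP; exists s; rewrite ?mem_iota /P ?evs //; lia.
have := nth_find 0 hasP.
rewrite nth_iota; last by move: hasP; rewrite has_find size_iota.
rewrite /P; case evt: (ev _) => [[j' r']|] // /eqP jj; subst j'.
by have := eviction_time_inj evt evs; lia.
Qed.

Lemma ev_time_le_nu j r : evicted_by ev j r -> ev_time T ev j <= nu T sigma j.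
Proof.
move=> [s evs]; have [sT jC _ _] := evictionP evs.
by rewrite (ev_timeE evs); have := cached_lt_nu (t := s.-1) ltac:(lia) jC; lia.
Qed.

Lemma chain_ev_time b x : is_chain T sigma ev b -> x.+1 < size b ->
  ev_time T ev (nth 0 b x.+1) = nu T sigma (nth 0 b x).
Proof. by move=> chain /chain[r]; exact: ev_timeE. Qed.

Lemma edge_source_cached H a j s r : eviction_graph T sigma C ev H -> H a j ->
  ev s = Some (j, r) -> a \in C s.-1.
Proof.
move=> [edge _] /edge[_ _ [t [r' [evt _ aC _]]]] evs.
by rewrite -(eviction_time_inj evt evs).
Qed.

End AlternatingOracleRun.

Lemma psi_le_group_size k T ev b : psi k T ev b <= size b %/ 6.
Proof.
by rewrite /psi geq_max; apply/andP; split;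
  apply: leq_trans (count_size _ _) _; rewrite size_iota.
Qed.

Section DivisibleChain.

Variables (k T : nat) (sigma omega : nat -> nat).
Variables (C : nat -> seq nat) (ev : nat -> option (nat * rule)).
Variables (H : nat -> nat -> Prop) (a : nat) (b : seq nat) (m : nat).
Hypothesis run : alt_oracle_run k T sigma omega C ev.
Hypothesis graph : eviction_graph T sigma C ev H.
Hypothesis edges : forall x, x \in b -> H a x.
Hypothesis div : divisible T sigma ev b.
Hypothesis size_b : size b = 6 * m.

Local Notation lpage i := (nth 0 b (3 * i)).
Local Notation cpage i := (nth 0 b (3 * i).+1).
Local Notation rpage i := (nth 0 b (3 * i).+2).

Definition time_c i := ev_time T ev (cpage i).
Definition time_r i := ev_time T ev (rpage i).

Local Notation wide := (wide_gap k 10 time_r time_c).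
Local Notation short := (short_triple k T ev b).

Lemma triple_rules i : i < 2 * m ->
  [/\ evicted_by ev (lpage i) BlindOracle, evicted_by ev (cpage i) RandomAlg &
      evicted_by ev (rpage i) Corrector].
Proof.
by case: div => _ [_ rules] lti; apply: rules; rewrite size_b -[6]/(3 * 2) -mulnA mulKn.
Qed.

Lemma chain_nu x :
  x.+1 < size b -> ev_time T ev (nth 0 b x.+1) = nu T sigma (nth 0 b x).
Proof. by move=> ltx; apply: (chain_ev_time run (proj1 div) ltx). Qed.

Lemma time_c_le_time_r i : i < 2 * m -> time_c i <= time_r i.
Proof.
move=> lti; have [_ evc _] := triple_rules lti.
rewrite /time_r chain_nu ?size_b; last lia.
exact: (ev_time_le_nu run evc).
Qed.

Lemma time_r_le_time_c_succ i : i.+1 < 2 * m -> time_r i <= time_c i.+1.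
Proof.
move=> lti; have [_ _ evr] := triple_rules (ltnW lti).
have [evl _ _] := triple_rules lti.
rewrite /time_c chain_nu ?size_b; last lia.
apply: (leq_trans _ (ev_time_le_nu run evl)).
rewrite (_ : 3 * i.+1 = (3 * i).+2.+1); last lia.
rewrite chain_nu ?size_b; last lia.
exact: (ev_time_le_nu run evr).
Qed.

Lemma source_cached x s r :
  ev s = Some (nth 0 b x, r) -> x < size b -> a \in C s.-1.
Proof.
by move=> evs ltx; apply: (edge_source_cached run graph (edges (mem_nth 0 ltx)) evs).
Qed.

Lemma blind_eta i : i < 2 * m -> omega a - time_c i <= eta T sigma omega (lpage i).
Proof.
move=> lti; have [[s evs] _ _] := triple_rules lti.
have [_ _ blind _] := evictionP run evs.
have := blind a (source_cached evs ltac:(lia)).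
by rewrite /time_c chain_nu ?size_b /eta; lia.
Qed.

Lemma corrector_eta i : i < 2 * m -> time_r i - omega a <= eta T sigma omega (rpage i).
Proof.
move=> lti; have [_ _ [s evs]] := triple_rules lti.
have [_ _ corrector _] := evictionP run evs.
have nu_ge := ev_time_le_nu run (ex_intro _ s evs).
rewrite /time_r (ev_timeE run evs) in nu_ge *.
have [late | ] := ltnP (omega a) s; last by rewrite -subn_eq0 => /eqP ->.
have aW : a \in [seq j <- C s.-1 | omega j < s].
  by rewrite mem_filter late (source_cached evs ltac:(lia)).
move: corrector aW; rewrite /rule_ok /=.
case: [seq j <- C s.-1 | omega j < s] => // x W [_ least] aW.
by have := least a aW; rewrite /eta; lia.
Qed.

Lemma wide_count_ge n0 : count short (iota n0 m) <= psi k T ev b ->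
  m - psi k T ev b <= count wide (iota n0 m).
Proof.
move=> few_short; have := count_predC wide (iota n0 m).
rewrite size_iota (@eq_count _ (predC wide) short) => [|i]; first lia.
by rewrite /= /short_triple natr_sub_le_div // /wide_gap -leqNgt.
Qed.

Lemma right_group_bound : omega a <= time_c m ->
  k * (m - psi k T ev b) ^ 2 <= 20 * \sum_(m <= i < 2 * m) eta T sigma omega (rpage i).
Proof.
move=> early.
have few : m - psi k T ev b <= count wide (iota m m).
  by apply: wide_count_ge; rewrite /psi size_b mulKn // leq_maxr.
have prefix j : j < m ->
    k * count wide (iota m j.+1) <= 10 * (time_r (m + j) - omega a).
  move=> ltj; have := count_wide_gap_span k 10 (a := m) (p := j)
    (fun i hi => time_c_le_time_r (i := i) ltac:(lia))
    (fun i hi => time_r_le_time_c_succ (i := i) ltac:(lia)).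
  lia.
have := sum_prefix_counts (g := fun i => time_r i - omega a) prefix.
rewrite (_ : m + m = 2 * m); last lia.
move/(leq_trans (sq_le_triangular k few))/leq_trans; apply.
by rewrite leq_mul2l leq_sum_nat // => i hi; apply: corrector_eta; lia.
Qed.

Lemma left_group_bound : time_c m < omega a ->
  k * (m - psi k T ev b) ^ 2 <= 20 * \sum_(0 <= i < m) eta T sigma omega (lpage i).
Proof.
move=> late.
have few : m - psi k T ev b <= count wide (iota 0 m).
  by apply: wide_count_ge; rewrite /psi size_b mulKn // leq_maxl.
have suffix j : j < m ->
    k * count wide (iota (0 + j) (m - j)) <= 10 * (omega a - time_c (0 + j)).
  move=> ltj; rewrite add0n (_ : m - j = (m - j.+1).+1); last lia.
  have := count_wide_gap_span k 10 (a := j) (p := m - j.+1)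
    (fun i hi => time_c_le_time_r (i := i) ltac:(lia))
    (fun i hi => time_r_le_time_c_succ (i := i) ltac:(lia)).
  have := time_r_le_time_c_succ (i := m.-1).
  rewrite prednK; last lia.
  rewrite (_ : j + (m - j.+1) = m.-1); last lia.
  lia.
move: (sum_suffix_counts (g := fun i => omega a - time_c i) suffix); rewrite add0n.
move/(leq_trans (sq_le_triangular k few))/leq_trans; apply.
by rewrite leq_mul2l leq_sum_nat // => i hi; apply: blind_eta; lia.
Qed.

Lemma eta_sum_lower_bound :
  k * (m - psi k T ev b) ^ 2 <= 20 * \sum_(x < size b) eta T sigma omega (nth 0 b x).
Proof.
have mid : m <= 2 * m by lia.
have triples := sum_triples_le (fun x => eta T sigma omega (nth 0 b x)) (2 * m).
rewrite (_ : 3 * (2 * m) = size b) ?[leqRHS]big_mkord in triples; last lia.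
rewrite big_split /= !(big_cat_nat (leq0n m) mid) /= in triples.
apply: (leq_trans _ (leq_mul (leqnn 20) triples)).
by case: (leqP (omega a) (time_c m)) => [/right_group_bound | /left_group_bound]; lia.
Qed.

End DivisibleChain.

Unset Implicit Arguments.
Local Open Scope ring_scope.

Theorem mainTheorem10 (k T : nat) (sigma omega : nat -> nat)
    (C : nat -> seq nat) (ev : nat -> option (nat * rule))
    (H : nat -> nat -> Prop) (a : nat) (b : seq nat) :
  alt_oracle_run k T sigma omega C ev ->
  eviction_graph T sigma C ev H ->
  (forall x, x \in b -> H a x) ->
  divisible T sigma ev b ->
  ((size b)%:R / 6 - (psi k T ev b)%:R) ^+ 2 * k%:R / 20
    <= \sum_(x < size b) ((eta T sigma omega (nth 0%N b x))%:R : rat).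
Proof.
move=> run graph edges div; have [_ [[m [_ size_b]] _]] := div.
have psi_le_m : (psi k T ev b <= m)%N.
  by have := psi_le_group_size k T ev b; rewrite size_b mulKn.
have bound := eta_sum_lower_bound run graph edges div size_b.
rewrite -natr_sum {1}size_b.
have -> : (6 * m)%:R / 6 = m%:R :> rat by rewrite natrM mulrC mulKf ?pnatr_eq0.
rewrite -natrB // -natrX -natrM.
by rewrite ler_pdivrMr ?ltr0n // -natrM ler_nat mulnC (mulnC _ 20).
Qed.
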